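(* Let $\Delta$ be a simplicial complex on $[n]$, let $1\le r\le n$, and let $\Sigma=\Delta^{[1]}\cup\Delta^{[2]}\cup\dots\cup\Delta^{[r]}$. Suppose $\Delta$ is fixed by permutations on $[r]$. If $\widetilde H_i(\Sigma)\neq0$, then $\widetilde H_{i-1}(\Delta)\neq0$.
   Context: A simplicial complex on $[n]=\{1,\dots,n\}$ is a collection of subsets of $[n]$ closed under taking subsets (not every singleton need belong to it). $\widetilde H_i$ denotes reduced simplicial homology with coefficients in a field $\Bbbk$. For a simplicial complex $\Delta$ and an element $v$ (not necessarily a vertex of $\Delta$), $\Delta^{[v]}=\Delta\cup\{F\cup\{v\}:F\in\Delta\}$. For $X\subset[n]$, $\Delta$ is fixed by permutations on $X$ if $\sigma(\Delta)=\{\sigma(F):F\in\Delta\}$ equals $\Delta$ for every permutation $\sigma$ of $[n]$ fixing each element outside $X$. *)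

From HB Require Import structures.
From mathcomp Require Import all_boot all_order all_algebra all_fingroup.
Set Implicit Arguments. Unset Strict Implicit. Unset Printing Implicit Defensive.
Import GRing.Theory.
Local Open Scope ring_scope.

(* Vertex set [n] = {1,..,n} is modelled by 'I_n (vertex j+1 <-> ordinal j). *)

Definition is_simplicial_complex n (D : {set {set 'I_n}}) : Prop :=
  forall F G : {set 'I_n}, F \in D -> G \subset F -> G \in D.

Definition cone n (D : {set {set 'I_n}}) (v : 'I_n) : {set {set 'I_n}} :=
  D :|: [set v |: F | F in D].

(* Σ = D^[1] ∪ ... ∪ D^[r], i.e. cones over the ordinals 0..r-1 *)
Definition multicone n (D : {set {set 'I_n}}) (r : nat) : {set {set 'I_n}} :=
  [set F | [exists v : 'I_n, (v < r)%N && (F \in cone D v)]].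

Definition fixed_by_perms_on n (D : {set {set 'I_n}}) (X : {set 'I_n}) : Prop :=
  forall s : {perm 'I_n}, (forall x, x \notin X -> s x = x) ->
    [set [set s x | x in F] | F : {set 'I_n} in D] = D.

(* Faces of D with exactly k elements (dimension k-1; k = 0 is the empty face,
   giving the augmented/reduced chain complex). *)
Definition faces n (D : {set {set 'I_n}}) (k : nat) : {set {set 'I_n}} :=
  [set F in D | #|F| == k].

Definition bd_coef (K : fieldType) n (F G : {set 'I_n}) : K :=
  match [pick v in F | G == F :\ v] with
  | Some v => (-1) ^+ #|[set u in F | (u < v)%N]|
  | None => 0
  end.

(* Boundary map C_{k+1} -> C_k (size k+1 faces to size k faces), as a
   matrix acting on row vectors. *)
Definition bd (K : fieldType) n (D : {set {set 'I_n}}) (k : nat)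
  : 'M[K]_(#|faces D k.+1|, #|faces D k|) :=
  \matrix_(i, j) bd_coef K (enum_val i) (enum_val j).

(* Cycles in size-k chains: kernel of the boundary map out of C_k
   (the boundary out of C_0 = C_{-1 in degree} is zero). *)
Definition cycles (K : fieldType) n (D : {set {set 'I_n}}) (k : nat)
  : 'M[K]_(#|faces D k|) :=
  match k as k0 return 'M[K]_(#|faces D k0|) with
  | 0 => 1%:M
  | m.+1 => kermx (bd K D m)
  end.

(* Reduced homology in degree k-1 is nonzero: cycles not contained in
   the row space of boundaries (H = Z / B ≠ 0). *)
Definition rhom_nz_size (K : fieldType) n (D : {set {set 'I_n}}) (k : nat) : bool :=
  ~~ (cycles K D k <= bd K D k)%MS.

(* \tilde H_i(D; K) ≠ 0, for i an integer (zero for i < -1). *)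
Definition rhom_nz (K : fieldType) n (D : {set {set 'I_n}}) (i : int) : bool :=
  match i with
  | Posz m => rhom_nz_size K D m.+1
  | Negz 0 => rhom_nz_size K D 0
  | Negz _ => false
  end.

From HB Require Import structures.
From mathcomp Require Import all_boot all_order all_algebra all_fingroup.
Local Open Scope ring_scope.
Import GRing.Theory.
Set Implicit Arguments. Unset Strict Implicit. Unset Printing Implicit Defensive.

(* We show: if every (k-1)-dimensional reduced cycle of D bounds, then
   so does every k-dimensional reduced cycle of S; Lemma 3.2 is the
   contrapositive.

   Let o be the least vertex.
   Coning with o fills every cycle of S except on "blocked" faces: faces of
   S \ D avoiding o.  Blocked faces are grouped by their trace A on [r]; for
   each trace we pick a in A, turn the link of the given cycle z at a into a
   cycle of D, fill it in D, and cone the filling back at a.  This gives a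
   chain whose boundary matches z on blocked faces of trace A and vanishes on
   blocked faces of other traces.  Subtracting the boundaries of all these
   corrections leaves a cycle without blocked faces, which the o-cone fills.
   The symmetry of D enters only through [multicone_apex]. *)

Lemma setD1_notin (T : finType) (F : {set T}) v : v \notin F -> F :\ v = F.
Proof. by move=> vF; apply/setP => u; rewrite !inE; case: eqVneq => // ->; rewrite (negPf vF). Qed.

Lemma setU1D1 (T : finType) (x v : T) (F : {set T}) : x != v -> (x |: F) :\ v = x |: (F :\ v).
Proof. by move=> xv; apply/setP => u; rewrite !inE; case: (eqVneq u x) => // ->; rewrite xv. Qed.

(* Chains with coefficients in K are functions from faces to K; only their
   values on faces of the complex at hand matter, which [supported] records. *)
Section Chains.
Variables (K : fieldType) (n : nat).
Implicit Types (F G H : {set 'I_n}) (c d : {set 'I_n} -> K).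

Definition vsign F (x : 'I_n) : K := (-1) ^+ #|[set u in F | (u < x)%N]|.

Definition boundary c G : K := \sum_(x | x \notin G) vsign G x * c (x |: G).

Definition supported c (P : {set {set 'I_n}}) : Prop := forall F, c F != 0 -> F \in P.

Lemma vsignU1 F x : vsign (x |: F) x = vsign F x.
Proof.
rewrite /vsign (_ : [set u in x |: F | (u < x)%N] = [set u in F | (u < x)%N]) //.
by apply/setP => u; rewrite !inE; have [->|] := eqVneq u x; rewrite ?ltnn ?andbF.
Qed.

Lemma vsign_min F (o : 'I_n) : nat_of_ord o = 0%N -> vsign F o = 1.
Proof.
move=> o0; rewrite /vsign o0 (_ : [set u in F | (u < 0)%N] = set0) ?cards0 //.
by apply/setP => u; rewrite !inE ltn0 andbF.
Qed.

Lemma vsignU1_lt F (x y : 'I_n) :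
  y \notin F -> (y < x)%N -> vsign (y |: F) x = - vsign F x.
Proof.
move=> yF yx; rewrite /vsign.
rewrite (_ : [set u in y |: F | (u < x)%N] = y |: [set u in F | (u < x)%N]).
  by rewrite cardsU1 !inE (negbTE yF) /= exprS mulN1r.
by apply/setP => u; rewrite !inE; have [->|] := eqVneq u y; rewrite ?yx.
Qed.

Lemma vsignU1_gt F (x y : 'I_n) : (x < y)%N -> vsign (y |: F) x = vsign F x.
Proof.
move=> xy; rewrite /vsign (_ : [set u in y |: F | (u < x)%N] = [set u in F | (u < x)%N]) //.
apply/setP => u; rewrite !inE; have [->|//] := eqVneq u y.
by rewrite /= ltnNge (ltnW xy) andbF.
Qed.

Lemma boundaryD c d G : boundary (fun F => c F + d F) G = boundary c G + boundary d G.
Proof. by rewrite /boundary -big_split; apply: eq_bigr => x _; rewrite mulrDr. Qed.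

Lemma boundaryB c d G : boundary (fun F => c F - d F) G = boundary c G - boundary d G.
Proof. by rewrite /boundary -sumrB; apply: eq_bigr => x _; rewrite mulrBr. Qed.

Lemma boundary_sum (I : finType) (P : pred I) (c : I -> {set 'I_n} -> K) G :
  boundary (fun F => \sum_(A | P A) c A F) G = \sum_(A | P A) boundary (c A) G.
Proof.
rewrite /boundary exchange_big /=; apply: eq_bigr => x _.
by rewrite mulr_sumr.
Qed.

(* The boundary of a boundary vanishes: the two ways of removing the
   vertices x < y from a face carry opposite signs. *)
Lemma boundary_boundary c H : boundary (boundary c) H = 0.
Proof.
pose g x y := if (x \notin H) && (y \notin H) && (x != y) then
   vsign H x * vsign (x |: H) y * c (y |: (x |: H)) else 0.
transitivity (\sum_x \sum_y g x y).
  rewrite /boundary big_mkcond; apply: eq_bigr => x _ /=.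
  case: ifP => xH; last by rewrite big1 // => y _; rewrite /g xH.
  rewrite mulr_sumr big_mkcond; apply: eq_bigr => y _.
  by rewrite /g xH !inE negb_or eq_sym andbC /=; case: ifP; rewrite ?mulr0 ?mulrA.
have split_xy x y : g x y = (if (x < y)%N then g x y else 0) + (if (y < x)%N then g x y else 0).
  case: (ltngtP x y) => [||/val_inj xy]; rewrite ?addr0 ?add0r //.
  by rewrite /g xy eqxx andbF.
under eq_bigr => x _ do (under eq_bigr => y _ do rewrite split_xy; rewrite big_split /=).
rewrite big_split /= [X in _ + X]exchange_big /= -big_split /=.
apply: big1 => x _; rewrite -big_split /=; apply: big1 => y _.
case: (ltngtP x y) => xy; rewrite ?addr0 ?add0r //.
have xny : x != y by apply: contraTneq xy => ->; rewrite ltnn.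
rewrite /g xny eq_sym xny [(y \notin H) && _]andbC !andbT.
case: ifP => [/andP [xH yH]|]; last by rewrite add0r.
rewrite (setUCA [set x] [set y] H) vsignU1_lt // vsignU1_gt //.
by rewrite mulrN mulNr [vsign H y * _]mulrC addNr.
Qed.

Lemma supportedD (P : {set {set 'I_n}}) c d :
  supported c P -> supported d P -> supported (fun F => c F + d F) P.
Proof.
by move=> hc hd F; have [c0|/hc //] := eqVneq (c F) 0; rewrite c0 add0r => /hd.
Qed.

Lemma supportedB (P : {set {set 'I_n}}) c d :
  supported c P -> supported d P -> supported (fun F => c F - d F) P.
Proof.
by move=> hc hd F; have [c0|/hc //] := eqVneq (c F) 0; rewrite c0 sub0r oppr_eq0 => /hd.
Qed.

Lemma supported_sum (I : finType) (J : pred I) (c : I -> {set 'I_n} -> K) P :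
  (forall i, J i -> supported (c i) P) -> supported (fun F => \sum_(i | J i) c i F) P.
Proof.
move=> hc F nz; have [i Ji] : exists2 i, J i & c i F != 0.
  apply/exists_inP; apply: contraR nz => /exists_inPn c0.
  by apply/eqP/big1 => i Ji; apply/eqP/negPn/c0.
exact: hc.
Qed.

Lemma boundary_nz c G : boundary c G != 0 -> exists2 x, x \notin G & c (x |: G) != 0.
Proof.
move=> nz; apply/exists_inP; apply: contraR nz => /exists_inPn c0.
apply/eqP/big1 => x xG; move/negPn/eqP: (c0 x xG) => ->; exact: mulr0.
Qed.

Lemma boundary_supported (P : {set {set 'I_n}}) k c :
  is_simplicial_complex P -> supported c (faces P k.+1) -> supported (boundary c) (faces P k).
Proof.
move=> hP hc G /boundary_nz [x xG /hc]; rewrite !inE cardsU1 (negPf xG).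
by case/andP=> /hP -> //; apply: subsetUr.
Qed.

Lemma boundary_faces0 (P : {set {set 'I_n}}) c G : supported c (faces P 0) -> boundary c G = 0.
Proof.
move=> hc; apply/eqP; apply: contraT => /boundary_nz [x xG /hc].
by rewrite inE cardsU1 (negPf xG) andbF.
Qed.

Lemma boundary_bd_coef c G : boundary c G = \sum_F c F * bd_coef K F G.
Proof.
have bd_coefE F : bd_coef K F G = \sum_(x | x \notin G) (F == x |: G)%:R * vsign G x.
  rewrite /bd_coef; case: pickP => [w /andP [wF /eqP ->] | no_pick].
    rewrite (bigD1 w) /=; last by rewrite !inE eqxx.
    rewrite setD1K // eqxx mul1r -/(vsign F w) -{1}(setD1K wF) vsignU1.
    rewrite big1 ?addr0 // => x /andP [xG xw].
    case: eqP => [eF|]; last by rewrite mul0r.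
    have xF : x \in F by rewrite eF setU11.
    by move: xG; rewrite !inE xw xF.
  symmetry; apply: big1 => x xG; case: eqP => [eF|]; last by rewrite mul0r.
  by move: (no_pick x); rewrite eF setU11 setU1K // eqxx.
under [RHS]eq_bigr => F _ do rewrite bd_coefE mulr_sumr.
rewrite exchange_big /=; apply: eq_bigr => x xG.
rewrite (bigD1 (x |: G)) //= eqxx mul1r mulrC big1 ?addr0 // => F /negPf ->.
by rewrite mul0r mulr0.
Qed.

Section Cone.
Variable o : 'I_n.
Hypothesis o_min : nat_of_ord o = 0%N.

Definition cone_chain c F : K := if o \in F then c (F :\ o) else 0.

Lemma cone_homotopy c G : boundary (cone_chain c) G + cone_chain (boundary c) G = c G.
Proof.
rewrite /boundary /cone_chain; case: ifP => oG; last first.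
  rewrite addr0 (bigD1 o) ?oG //= setU11 setU1K ?oG // vsign_min // mul1r.
  rewrite big1 ?addr0 // => x /andP [xG xo].
  by rewrite !inE oG eq_sym (negbTE xo) /= mulr0.
have o_lt x : x != o -> (o < x)%N.
  move=> xo; rewrite o_min lt0n; apply: contra xo => /eqP x0.
  by apply/eqP/val_inj; rewrite /= x0 o_min.
rewrite (bigD1 o (_ : o \notin G :\ o)) /=; last by rewrite !inE eqxx.
rewrite setD1K // vsign_min // mul1r addrCA -[RHS]addr0; congr (_ + _).
have notin_Do x : (x \notin G :\ o) && (x != o) = (x \notin G).
  by rewrite !inE; have [->|] := eqVneq x o; rewrite ?oG //= andbT.
rewrite (eq_bigl _ _ notin_Do) -big_split /= big1 // => x xG.
have xo : x != o by apply: contraNneq xG => ->.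
by rewrite setU1r // setU1D1 // -{1}(setD1K oG) vsignU1_lt ?o_lt ?setD11 // mulNr addNr.
Qed.

Lemma cone_fill c : (forall G, boundary c G = 0) -> forall G, boundary (cone_chain c) G = c G.
Proof.
move=> cyc G; rewrite -[RHS]cone_homotopy /cone_chain.
by case: ifP => _; rewrite ?cyc addr0.
Qed.

End Cone.
End Chains.

(* Every cycle of D on k-element faces bounds a chain on (k+1)-element faces,
   i.e. the reduced homology of D in dimension k-1 vanishes. *)
Definition acyclic (K : fieldType) n (D : {set {set 'I_n}}) (k : nat) : Prop :=
  forall c : {set 'I_n} -> K, supported c (faces D k) -> (forall G, boundary c G = 0) ->
  exists2 d, supported d (faces D k.+1) & forall G, boundary d G = c G.

(* Chains supported on a family P correspond to row vectors indexed by P;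
   through this dictionary [boundary] becomes right multiplication by [bd]. *)
Section ChainsAsRows.
Variables (K : fieldType) (n : nat).
Implicit Types (P : {set {set 'I_n}}) (F G : {set 'I_n}) (c d : {set 'I_n} -> K).

Definition row_of_chain P c : 'rV[K]_#|P| := \row_i c (enum_val i).

Definition chain_of_row P (x : 'rV[K]_#|P|) F : K := \sum_i (enum_val i == F)%:R * x 0 i.

Lemma chain_of_rowK P (x : 'rV[K]_#|P|) : row_of_chain P (chain_of_row x) = x.
Proof.
apply/rowP => j; rewrite mxE /chain_of_row (bigD1 j) //= eqxx mul1r big1 ?addr0 //.
by move=> i ij; rewrite (inj_eq enum_val_inj) (negPf ij) mul0r.
Qed.

Lemma chain_of_row_supported P (x : 'rV[K]_#|P|) : supported (chain_of_row x) P.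
Proof.
move=> F nz; have [i _] : exists2 i, true & (enum_val i == F)%:R * x 0 i != 0.
  apply/exists_inP; apply: contraR nz => /exists_inPn x0.
  by apply/eqP/big1 => i _; apply/eqP/negPn/x0.
by have [<- _|_] := eqVneq (enum_val i) F; [exact: enum_valP | rewrite mul0r eqxx].
Qed.

Lemma sum_supported P c (g : {set 'I_n} -> K) : supported c P ->
  \sum_F c F * g F = \sum_(i < #|P|) c (enum_val i) * g (enum_val i).
Proof.
move=> hc; rewrite -(big_enum_val (A := mem P) (fun F => c F * g F)) /=.
rewrite [RHS]big_mkcond /=; apply: eq_bigr => F _.
case: ifP => // FP; have /eqP -> : c F == 0 by apply: contraFT FP => /hc.
exact: mul0r.
Qed.

Lemma row_of_chain_inj P c d : supported c P -> supported d P ->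
  row_of_chain P c = row_of_chain P d -> forall F, c F = d F.
Proof.
move=> hc hd e F; have [FP|FP] := boolP (F \in P).
  by move/rowP: e => /(_ (enum_rank_in FP F)); rewrite !mxE enum_rankK_in.
have zero_off (f : {set 'I_n} -> K) : supported f P -> f F = 0.
  by move=> hf; apply/eqP; apply: contraNT FP => /hf.
by rewrite (zero_off c) ?(zero_off d).
Qed.

Lemma row_of_boundary (D : {set {set 'I_n}}) k d : supported d (faces D k.+1) ->
  row_of_chain _ d *m bd K D k = row_of_chain _ (boundary d).
Proof.
move=> hd; apply/rowP => j; rewrite !mxE boundary_bd_coef (sum_supported _ hd).
by apply: eq_bigr => i _; rewrite !mxE.
Qed.

End ChainsAsRows.

Section AcyclicHomology.
Variables (K : fieldType) (n : nat) (D : {set {set 'I_n}}).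
Hypothesis hD : is_simplicial_complex D.

Lemma cycle_row k (c : {set 'I_n} -> K) : supported c (faces D k) ->
  (forall G, boundary c G = 0) -> (row_of_chain (faces D k) c <= cycles K D k)%MS.
Proof.
case: k c => [|k] c hc cyc; first exact: submx1.
by apply/sub_kermxP; rewrite row_of_boundary //; apply/rowP => j; rewrite !mxE cyc.
Qed.

Lemma row_cycle k (x : 'rV[K]_#|faces D k|) : (x <= cycles K D k)%MS ->
  forall G, boundary (chain_of_row x) G = 0.
Proof.
case: k x => [|k] x xcyc; have hx := chain_of_row_supported (x := x).
  by move=> G; apply: boundary_faces0 hx.
apply: (row_of_chain_inj (boundary_supported hD hx)) => // [G|]; first by rewrite eqxx.
rewrite -row_of_boundary // chain_of_rowK (sub_kermxP xcyc).
by apply/rowP => j; rewrite !mxE.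
Qed.

Lemma acyclicP k : acyclic K D k <-> ~~ rhom_nz_size K D k.
Proof.
rewrite /rhom_nz_size negbK; split => [acyc | hsub c hc cyc].
  apply/row_subP => i; set x := row i (cycles K D k).
  have [d hd hdb] := acyc _ (chain_of_row_supported (x := x)) (row_cycle (row_sub i _)).
  apply/submxP; exists (row_of_chain _ d); rewrite row_of_boundary // -{1}(chain_of_rowK x).
  by apply/rowP => j; rewrite !mxE hdb.
have /submxP [y ey] := submx_trans (cycle_row hc cyc) hsub.
have hy := chain_of_row_supported (x := y).
exists (chain_of_row y) => //.
apply: (row_of_chain_inj (boundary_supported hD hy) hc).
by rewrite -row_of_boundary // chain_of_rowK ey.
Qed.

End AcyclicHomology.

Definition exchangeable n r (P : {set {set 'I_n}}) : Prop :=
  forall (a b : 'I_n) (G : {set 'I_n}), (a < r)%N -> (b < r)%N -> a \notin G -> b \notin G ->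
    a |: G \in P -> b |: G \in P.

Lemma exchangeable_of_fixed n r (D : {set {set 'I_n}}) :
  fixed_by_perms_on D [set v : 'I_n | (v < r)%N] -> exchangeable r D.
Proof.
move=> hfix a b G ar br aG bG aGD.
have fixR x : x \notin [set v : 'I_n | (v < r)%N] -> tperm a b x = x.
  by rewrite inE => xr; apply: tpermD; apply: contraNneq xr => <-.
have fixG x : x \in G -> tperm a b x = x.
  by move=> xG; apply: tpermD; [apply: contraNneq aG | apply: contraNneq bG] => ->.
rewrite -(hfix _ fixR); apply/imsetP; exists (a |: G) => //.
rewrite imsetU1 tpermL; congr (_ |: _); apply/setP => u.
by apply/idP/imsetP => [uG|[x xG ->]]; [exists u; rewrite ?fixG | rewrite fixG].
Qed.

Section Multicone.
Variables (n r : nat) (D : {set {set 'I_n}}).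
Hypothesis hD : is_simplicial_complex D.
Implicit Types F G H : {set 'I_n}.
Local Notation S := (multicone D r).

Lemma multiconeE F : (F \in S) = [exists v : 'I_n, (v < r)%N && (F :\ v \in D)].
Proof.
rewrite inE; apply/existsP/existsP => -[v /andP [vr hv]]; exists v; rewrite vr /=.
  move: hv; rewrite /cone inE => /orP [FD | /imsetP [G GD ->]].
    exact: hD FD (subD1set F v).
  by apply: hD GD _; rewrite setDUl setDv set0U subD1set.
rewrite /cone inE; have [vF|vF] := boolP (v \in F); last by rewrite -(setD1_notin vF) hv.
by apply/orP; right; apply/imsetP; exists (F :\ v); rewrite ?setD1K.
Qed.

Lemma multicone_complex : is_simplicial_complex S.
Proof.
move=> F G; rewrite !multiconeE => /existsP [v /andP [vr hv]] GF.
by apply/existsP; exists v; rewrite vr /=; apply: hD hv _; apply: setSD.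
Qed.

Lemma multicone_cone (v : 'I_n) G : (v < r)%N -> G \in D -> v |: G \in S.
Proof.
move=> vr GD; rewrite multiconeE; apply/existsP; exists v; rewrite vr /=.
by apply: hD GD _; rewrite setDUl setDv set0U subD1set.
Qed.

Hypothesis hex : exchangeable r D.

(* For exchangeable D, if x |: F is in S for an apex x of [r] outside F, then F
   is in D: the apex realizing x |: F can be exchanged with x. *)
Lemma multicone_apex (x : 'I_n) F : (x < r)%N -> x \notin F -> x |: F \in S -> F \in D.
Proof.
move=> xr xF; rewrite multiconeE => /existsP [v /andP [vr hv]].
have [vx|vx] := eqVneq v x; first by rewrite vx setU1K in hv.
have [vF|vF] := boolP (v \in F); last first.
  by apply: hD hv _; rewrite setD1_notin ?subsetUr // !inE negb_or vx.
have xFv : x \notin F :\ v by rewrite !inE negb_and xF orbT.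
have vFv : v \notin F :\ v by rewrite !inE eqxx.
rewrite -(setD1K vF); apply: hex xr vr xFv vFv _.
by rewrite -setU1D1 // eq_sym.
Qed.

End Multicone.

Section MeetR.
Variables (n r : nat).
Implicit Types (F G : {set 'I_n}) (x : 'I_n).
Local Notation R := [set v : 'I_n | (v < r)%N].

Lemma meetR_U1_in x G : (x < r)%N -> (x |: G) :&: R = x |: (G :&: R).
Proof. by move=> xr; rewrite setIUl (setIidPl _) // sub1set inE. Qed.

Lemma meetR_U1_out x G : ~~ (x < r)%N -> (x |: G) :&: R = G :&: R.
Proof.
by move=> xr; apply/setP => u; rewrite !inE; case: eqVneq => [->|] //=; rewrite (negPf xr) !andbF.
Qed.

Lemma meetR_D1 x G : (G :\ x) :&: R = (G :&: R) :\ x.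
Proof. by apply/setP => u; rewrite !inE andbA. Qed.

Lemma mem_meetR G B x : G :&: R = B -> (x < r)%N -> (x \in G) = (x \in B).
Proof. by move=> <- xr; rewrite !inE xr andbT. Qed.

End MeetR.

Section MulticoneHomology.
Variables (K : fieldType) (n r : nat) (D : {set {set 'I_n}}) (o : 'I_n).
Hypotheses (hD : is_simplicial_complex D) (hex : exchangeable r D).
Hypotheses (o_min : nat_of_ord o = 0%N) (o_r : (o < r)%N).
Implicit Types (F G H : {set 'I_n}) (x : 'I_n) (c : {set 'I_n} -> K).
Local Notation S := (multicone D r).
Local Notation R := [set v : 'I_n | (v < r)%N].

(* Faces of S where coning with o fails: since o |: F is in S exactly when
   F is in D (for o outside F, by [multicone_apex]), these are the faces of
   S \ D avoiding o. *)
Definition blocked F : bool := [&& F \in S, o \notin F & F \notin D].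

Lemma cone_fill_unblocked s c : supported c (faces S s) -> (forall F, c F != 0 -> ~~ blocked F) ->
  (forall G, boundary c G = 0) ->
  exists2 d, supported d (faces S s.+1) & forall G, boundary d G = c G.
Proof.
move=> hc unbl cyc; exists (cone_chain o c); last exact: cone_fill.
move=> F; rewrite /cone_chain; case: ifP => [oF nz|]; last by rewrite eqxx.
have := hc _ nz; rewrite inE => /andP [FS /eqP cF].
have := unbl _ nz; rewrite /blocked FS setD11 /= negbK => FD.
by rewrite inE -{1}(setD1K oF) multicone_cone //= (cardsD1 o F) oF cF.
Qed.

(* The empty face of S is never blocked, so S is acyclic in size 0. *)
Lemma multicone_acyclic0 : acyclic K S 0.
Proof.
move=> c hc; apply: (cone_fill_unblocked hc) => F /hc; rewrite inE => /andP [FS /eqP /cards0_eq F0].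
move: FS; rewrite F0 multiconeE // => /existsP [v /andP [_]].
by rewrite set0D /blocked => ->; rewrite !andbF.
Qed.

Lemma boundary_off_component (A : {set 'I_n}) c F : supported c S ->
  (forall G, c G != 0 -> G :&: R = A) -> blocked F -> F :&: R != A -> boundary c F = 0.
Proof.
move=> hc hcR /and3P [_ _ FD] FR; apply: big1 => x xF.
have [-> |nz] := eqVneq (c (x |: F)) 0; first exact: mulr0.
have xr : (x < r)%N.
  by apply: contraNT FR => xr; rewrite -(meetR_U1_out _ xr) hcR.
by move: FD; rewrite (multicone_apex hD hex xr xF (hc _ nz)).
Qed.

(* Correcting a cycle z of S on the blocked faces of a fixed trace A, via a
   vertex a of A. *)
Section Component.
Variables (k : nat) (A : {set 'I_n}) (a : 'I_n) (z : {set 'I_n} -> K).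
Hypotheses (AR : A \subset R) (oA : o \notin A) (aA : a \in A).
Hypotheses (hz : supported z (faces S k.+1)) (zcyc : forall G, boundary z G = 0).
Local Notation A' := (A :\ a).

Let a_r : (a < r)%N. Proof. by have := subsetP AR a aA; rewrite inE. Qed.
Let o_A' : o \notin A'. Proof. by rewrite !inE negb_and oA orbT. Qed.
Let a_A' : a \notin A'. Proof. by rewrite setD11. Qed.

Definition link_chain G : K :=
  if (G :&: R == A') && blocked (a |: G) then z (a |: G) else 0.

Lemma link_supported : supported link_chain (faces D k).
Proof.
move=> G; rewrite /link_chain; case: ifP => [/andP [/eqP GR bl] nz|]; last by rewrite eqxx.
have aG : a \notin G by rewrite (mem_meetR GR a_r).
move: (hz nz) (bl); rewrite !inE cardsU1 aG => /andP [_ /eqP [<-]] /and3P [aGS _ _].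
by rewrite (multicone_apex hD hex a_r aG aGS) eqxx.
Qed.

Lemma link_chain_in x H : (x < r)%N -> x \notin H -> H :&: R = A' -> link_chain (x |: H) = 0.
Proof.
move=> xr xH HR; rewrite /link_chain meetR_U1_in // HR.
case: eqP => [xA'|]; last by rewrite andFb.
by move: xH; rewrite (mem_meetR HR xr) -xA' setU11.
Qed.

Lemma z_vanish x H : o |: H \notin D -> H :&: R = A' -> (x < r)%N -> x \notin a |: H ->
  z (x |: (a |: H)) = 0.
Proof.
move=> oHD HR xr xaH; apply/eqP; apply: contraT => /hz; rewrite inE => /andP [xaHS _].
have aH : a \notin H by rewrite (mem_meetR HR a_r).
have oH : o \notin H by rewrite (mem_meetR HR o_r).
by move: oHD; rewrite (hex a_r o_r aH oH (multicone_apex hD hex xr xaH xaHS)).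
Qed.

Lemma link_chain_out x H : o |: H \notin D -> H :&: R = A' -> ~~ (x < r)%N ->
  link_chain (x |: H) = z (x |: (a |: H)).
Proof.
move=> oHD HR xr; rewrite /link_chain meetR_U1_out // HR eqxx setUCA /=.
case: ifP => // unbl; apply/esym/eqP; apply: contraFT unbl => /hz; rewrite inE => /andP [FS _].
have oa : o != a by apply: contraNneq oA => ->.
have ox : o != x by apply: contraNneq xr => <-.
have oH : o \notin H by rewrite (mem_meetR HR o_r).
have aH : a \notin H by rewrite (mem_meetR HR a_r).
rewrite /blocked FS !inE !negb_or oa ox oH /=; apply: contra oHD => FD.
by apply: hex a_r o_r aH oH _; apply: hD FD _; rewrite subsetUr.
Qed.

Lemma link_boundary_off H : o |: H \notin D -> H :&: R != A' -> boundary link_chain H = 0.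
Proof.
move=> oHD HR; apply: big1 => x xH; rewrite /link_chain.
case: ifP => [/andP [/eqP xHR /and3P [axHS _ _]]|]; last by rewrite mulr0.
have xr : (x < r)%N by apply: contraNT HR => xr; rewrite -(meetR_U1_out _ xr) xHR.
have axH : a \notin x |: H by rewrite (mem_meetR xHR a_r).
have oxH : o \notin x |: H by rewrite (mem_meetR xHR o_r).
have oH : o \notin H by apply: contra oxH => oH; rewrite setU1r.
have xHD := multicone_apex hD hex a_r axH axHS.
by move: oHD; rewrite (hex xr o_r xH oH xHD).
Qed.

(* On faces of trace A :\ a, the boundary of the link is minus the boundary
   of the cycle z at a |: H. *)
Lemma link_boundary_on H : o |: H \notin D -> H :&: R = A' -> boundary link_chain H = 0.
Proof.
move=> oHD HR; have aH : a \notin H by rewrite (mem_meetR HR a_r).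
rewrite -[RHS]oppr0 -(zcyc (a |: H)) /boundary (bigD1 a) //= link_chain_in // mulr0 add0r.
rewrite -sumrN; apply: eq_big => [x|x /andP [xH xa]]; first by rewrite !inE negb_or andbC.
have [xr|xr] := boolP (x < r)%N.
  have xaH : x \notin a |: H by rewrite !inE negb_or xa.
  by rewrite link_chain_in // z_vanish // !mulr0 oppr0.
have ax : (a < x)%N by apply: leq_trans a_r _; rewrite leqNgt.
by rewrite link_chain_out // vsignU1_lt // mulNr opprK.
Qed.

Lemma link_boundary H : o |: H \notin D -> boundary link_chain H = 0.
Proof.
move=> oHD; have [HR|HR] := eqVneq (H :&: R) A'.
  exact: link_boundary_on.
exact: link_boundary_off.
Qed.

(* Subtracting the o-cone over the boundary of the link yields a cycle of D,
   still of size k since that boundary lives on faces H with o |: H in D. *)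
Definition link_cycle G : K := link_chain G - cone_chain o (boundary link_chain) G.

Lemma link_cycle_supported : supported link_cycle (faces D k).
Proof.
move=> G; have [w0|nz] := eqVneq (link_chain G) 0; last by move=> _; exact: link_supported.
rewrite /link_cycle w0 sub0r oppr_eq0 /cone_chain; case: ifP => [oG nz|]; last by rewrite eqxx.
have GD : G \in D by apply: contraT => GD; rewrite link_boundary ?setD1K ?eqxx in nz.
have [x xG /link_supported] := boundary_nz nz.
rewrite !inE GD cardsU1 xG (cardsD1 o G) oG => /andP [_ /eqP <-].
by rewrite eqxx.
Qed.

Lemma link_cycle_cycle G : boundary link_cycle G = 0.
Proof.
have cone0 : cone_chain o (boundary (boundary link_chain)) G = 0.
  by rewrite /cone_chain boundary_boundary; case: ifP.
rewrite boundaryB; have := cone_homotopy o_min (boundary link_chain) G.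
by rewrite cone0 addr0 => ->; rewrite subrr.
Qed.

(* Given a filling u of the link cycle in D, coning its part of trace A :\ a
   at a (with a sign) corrects z on the blocked faces of trace A. *)
Section Filler.
Variable u : {set 'I_n} -> K.
Hypotheses (hu : supported u (faces D k.+1)) (hub : forall G, boundary u G = link_cycle G).

Definition component_filler F : K :=
  - cone_chain a (fun G => if G :&: R == A' then u G else 0) F.

Lemma filler_supported : supported component_filler (faces S k.+2).
Proof.
move=> F; rewrite /component_filler /cone_chain oppr_eq0.
case: ifP => [aF|]; last by rewrite eqxx.
case: ifP => [_ /hu|]; last by rewrite eqxx.
rewrite inE => /andP [FaD /eqP cF].
by rewrite inE -(setD1K aF) multicone_cone //= cardsU1 setD11 cF.
Qed.

Lemma filler_component F : component_filler F != 0 -> F :&: R = A.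
Proof.
rewrite /component_filler /cone_chain oppr_eq0.
case: ifP => [aF|]; last by rewrite eqxx.
case: ifP => [/eqP FaR _|]; last by rewrite eqxx.
by rewrite -(setD1K aF) meetR_U1_in // FaR setD1K.
Qed.

Lemma filler_boundary F : blocked F -> F :&: R = A -> boundary component_filler F = z F.
Proof.
move=> bl FR; have /and3P [_ oF FD] := bl.
have aF : a \in F by rewrite (mem_meetR FR a_r).
have FaR : (F :\ a) :&: R = A' by rewrite meetR_D1 FR.
have oFa : o \notin F :\ a by rewrite !inE negb_and oF orbT.
have -> : z F = boundary u (F :\ a).
  by rewrite hub /link_cycle /cone_chain (negPf oFa) subr0 /link_chain FaR eqxx setD1K ?bl.
rewrite /boundary [RHS](bigD1 a) ?setD11 //= setD1K //.
rewrite (_ : u F = 0) ?mulr0 ?add0r; last first.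
  by apply/eqP; apply: contraNT FD => /hu; rewrite inE => /andP [].
apply: eq_big => [x|x xF].
  by rewrite !inE; case: (eqVneq x a) => [->|]; rewrite ?aF ?andTb ?andbT ?andbF.
have xa : x != a by apply: contraNneq xF => ->.
rewrite /component_filler /cone_chain setU1r // setU1D1 //.
have [xr|xr] := boolP (x < r)%N.
  have xFa : x \notin F :\ a by rewrite !inE negb_and xF orbT.
  rewrite meetR_U1_in // FaR (_ : x |: A' == A' = false) ?oppr0 ?mulr0; last first.
    by apply/negbTE; apply: contraNneq xFa => xA'; rewrite (mem_meetR FaR xr) -xA' setU11.
  apply/esym/eqP; rewrite mulf_eq0; apply/orP; right; apply: contraNT FD => /hu.
  rewrite inE => /andP [xFaD _]; rewrite -(setD1K aF).
  by apply: hex xr a_r xFa _ xFaD; rewrite setD11.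
have ax : (a < x)%N by apply: leq_trans a_r _; rewrite leqNgt.
by rewrite meetR_U1_out // FaR eqxx -{1}(setD1K aF) vsignU1_lt ?setD11 // mulrNN.
Qed.

End Filler.

Lemma component_filler_exists : acyclic K D k -> exists y : {set 'I_n} -> K,
  [/\ supported y (faces S k.+2), forall F, y F != 0 -> F :&: R = A
    & forall F, blocked F -> F :&: R = A -> boundary y F = z F].
Proof.
move=> acyc; have [u hu hub] := acyc _ link_cycle_supported link_cycle_cycle.
by exists (component_filler u); split; [exact: filler_supported | exact: filler_component
  | exact: filler_boundary].
Qed.

End Component.

Definition components : {set {set 'I_n}} :=
  [set A : {set 'I_n} | [&& A \subset R, o \notin A & A != set0]].

Lemma blocked_trace F : blocked F -> F :&: R \in components.
Proof.
case/and3P=> FS oF FD; rewrite inE subsetIr !inE negb_and oF /=.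
move: FS; rewrite multiconeE // => /existsP [v /andP [vr vD]].
have vF : v \in F by apply: contraNT FD => vF; rewrite -(setD1_notin vF).
by apply/set0Pn; exists v; rewrite !inE vF vr.
Qed.

Lemma blocked_filler k (z : {set 'I_n} -> K) : acyclic K D k -> supported z (faces S k.+1) ->
  (forall G, boundary z G = 0) ->
  exists2 y, supported y (faces S k.+2) & forall F, blocked F -> boundary y F = z F.
Proof.
move=> acyc hz zcyc.
have /fin_all_exists [Y HY] : forall A : {set 'I_n}, exists y : {set 'I_n} -> K,
    A \in components -> [/\ supported y (faces S k.+2), forall F, y F != 0 -> F :&: R = A
      & forall F, blocked F -> F :&: R = A -> boundary y F = z F].
  move=> A; have [|_] := boolP (A \in components); last by exists (fun _ => 0).
  rewrite inE => /and3P [AR oA /set0Pn [a aA]].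
  have [y hy] := component_filler_exists AR oA aA hz zcyc acyc.
  by exists y.
exists (fun F => \sum_(A in components) Y A F).
  by apply: supported_sum => A /HY [].
move=> F bl; rewrite boundary_sum (bigD1 _ (blocked_trace bl)) /=.
have [_ _ ->] := HY _ (blocked_trace bl); rewrite // big1 ?addr0 // => A /andP [cA AF].
have [hyA hyR _] := HY _ cA.
apply: (boundary_off_component (A := A)) => // [G /hyA|]; first by rewrite inE => /andP [].
by rewrite eq_sym.
Qed.

Theorem multicone_acyclic k : acyclic K D k -> acyclic K S k.+1.
Proof.
move=> acyc z hz zcyc; have [y hy hyb] := blocked_filler acyc hz zcyc.
pose z' G := z G - boundary y G.
have hz' : supported z' (faces S k.+1).
  exact: supportedB hz (boundary_supported (multicone_complex hD) hy).
have z'cyc G : boundary z' G = 0 by rewrite boundaryB zcyc boundary_boundary subrr.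
have unbl F : z' F != 0 -> ~~ blocked F by apply: contra_neqN => bl; rewrite /z' hyb ?subrr.
have [d hd hdb] := cone_fill_unblocked hz' unbl z'cyc.
exists (fun F => y F + d F); first exact: supportedD.
by move=> G; rewrite boundaryD hdb /z' addrC subrK.
Qed.

End MulticoneHomology.

Unset Implicit Arguments.

(* Lemma 3.2.  The degree i corresponds to faces of size i+1, so the claim is
   the contrapositive of [multicone_acyclic] (for i >= 0) and the acyclicity of
   S in size 0 (for i = -1), with o the vertex 1. *)
Theorem lemma3p2 (K : fieldType) (n r : nat) (D : {set {set 'I_n}})
  (hD : is_simplicial_complex D) (hr1 : (1 <= r)%N) (hrn : (r <= n)%N)
  (hfix : fixed_by_perms_on D [set v : 'I_n | (v < r)%N])
  (i : int) :
  rhom_nz K (multicone D r) i -> rhom_nz K D (i - 1).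
Proof.
have n_pos : (0 < n)%N by apply: leq_trans hr1 hrn.
pose o : 'I_n := Ordinal n_pos.
have o_min : nat_of_ord o = 0%N by [].
have o_r : (o < r)%N by [].
have hex := exchangeable_of_fixed hfix.
have hS := multicone_complex (r := r) hD.
case: i => [m|[|m]] //=.
  have -> : rhom_nz K D (Posz m - 1) = rhom_nz_size K D m.
    by case: m => [|m] //=; rewrite subn1.
  apply: contraLR => /(acyclicP _ hD) acycD; apply/(acyclicP _ hS).
  exact: (multicone_acyclic hD hex o_min o_r acycD).
move=> nz; have /(acyclicP _ hS) := multicone_acyclic0 (K := K) hD o_min o_r.
by rewrite nz.
Qed.
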